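(* For any integers $x,y\ge 3$ and integers $a\le x/2$, $b\le y/2$, except for the case $x=y=4$, $a=b=2$, we have \[\binom{x}{a}\binom{y}{b}\le\binom{x+y-1}{a+b}.\] *)

From mathcomp Require Import all_boot.

From mathcomp Require Import all_boot.
From mathcomp Require Import zify.

(* Vandermonde's identity writes [C(x + y - 1, a + b)] as a sum of products
   [C(x - 1, i) * C(y, a + b - i)]; it suffices to keep two or three of its
   terms.  Pascal's rule splits [C(x, a)] as [C(x - 1, a - 1) + C(x - 1, a)].
   If [2b < y], then [C(y, b) <= C(y, b + 1)] and the two resulting products
   are dominated by the terms [i = a - 1] and [i = a] of the sum.  In the
   central case [x = 2a], [y = 2b] the three terms [i = a - 1, a, a + 1] are
   computed by the ratio rule for adjacent binomials: they exceed the left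
   hand side exactly when [(a + 1)(b + 1) <= 2ab], i.e. unless [a = b = 2]. *)

Lemma leq_sum_Vandermonde k l p m n : n <= p.+1 ->
  \sum_(m <= j < n) 'C(k, j) * 'C(l, p - j) <= 'C(k + l, p).
Proof.
move=> le_n_p; rewrite -Vandermonde.
rewrite -(big_mkord xpredT (fun j => 'C(k, j) * 'C(l, p - j))).
have [le_m_n | lt_n_m] := leqP m n; last by rewrite big_geq // ltnW.
rewrite (big_cat_nat (leq0n m) (leq_trans le_m_n le_n_p)).
by rewrite (big_cat_nat le_m_n le_n_p) /= addnCA leq_addr.
Qed.

Lemma leq_bin_Vandermonde3 k l c r :
  'C(k, c) * 'C(l, r.+2) + 'C(k, c.+1) * 'C(l, r.+1) + 'C(k, c.+2) * 'C(l, r)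
    <= 'C(k + l, c + r + 2).
Proof.
have := @leq_sum_Vandermonde k l (c + r + 2) c c.+3 ltac:(lia).
rewrite !big_nat_recl ?big_geq //; try lia.
have -> : c + r + 2 - c = r.+2 by lia.
have -> : c + r + 2 - c.+1 = r.+1 by lia.
have -> : c + r + 2 - c.+2 = r by lia.
by rewrite addn0 !addnA.
Qed.

Lemma leq_binS n m : m.*2 < n -> 'C(n, m) <= 'C(n, m.+1).
Proof.
move=> lt_2m_n; rewrite -(leq_pmul2l (ltn0Sn m)) mul_bin_left leq_mul2r.
by apply/orP; right; lia.
Qed.

Lemma leq_mul_bin_noncentral x y a b : 0 < a -> 0 < b -> b.*2 < y ->
  'C(x, a) * 'C(y, b) <= 'C(x + y - 1, a + b).
Proof.
case: x => [|x]; first by case: a.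
case: a => [|a] // _; case: b => [|b] // _ lt_b_y.
have -> : x.+1 + y - 1 = x + y by lia.
have -> : a.+1 + b.+1 = a + b + 2 by lia.
apply: leq_trans (leq_bin_Vandermonde3 x y a b).
have le_bin_y : 'C(y, b.+1) <= 'C(y, b.+2) by apply: leq_binS.
have : 'C(x, a) * 'C(y, b.+1) <= 'C(x, a) * 'C(y, b.+2).
  by rewrite leq_mul2l le_bin_y orbT.
rewrite binS mulnDl; lia.
Qed.

Lemma leq_mul_bin_central a b : 1 < a -> 1 < b -> 4 < a + b ->
  'C(a.*2, a) * 'C(b.*2, b) <= 'C(a.*2 + b.*2 - 1, a + b).
Proof.
case: a => [|a] //; case: b => [|b] // lt1a lt1b lt4ab.
have -> : a.+1.*2 + b.+1.*2 - 1 = a.*2.+1 + b.+1.*2 by lia.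
have -> : a.+1 + b.+1 = a + b + 2 by lia.
have := leq_bin_Vandermonde3 a.*2.+1 b.+1.*2 a b.
set P := 'C(a.*2.+1, a); set Q := 'C(a.*2.+1, a.+2).
set S := 'C(b.+1.*2, b.+1); set U := 'C(b.+1.*2, b.+2); set V := 'C(b.+1.*2, b).
have P_sym : 'C(a.*2.+1, a.+1) = P.
  by rewrite -[in LHS](_ : a.*2.+1 - a = a.+1) ?bin_sub //; lia.
have -> : 'C(a.+1.*2, a.+1) = P + P by rewrite doubleS binS P_sym.
have eQ : a.+2 * Q = a * P.
  by rewrite mul_bin_left P_sym (_ : a.*2.+1 - a.+1 = a) //; lia.
have eU : b.+2 * U = b.+1 * S.
  by rewrite mul_bin_left (_ : b.+1.*2 - b.+1 = b.+1) //; lia.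
have eV : b.+1 * S = b.+2 * V.
  by rewrite mul_bin_left (_ : b.+1.*2 - b = b.+2) //; lia.
rewrite P_sym => le_terms.
suff le_PS : P * S <= P * U + Q * V by lia.
have scaled : a.+2 * b.+2 * (P * U + Q * V) = 2 * a.+1 * b.+1 * (P * S) by nia.
rewrite -(@leq_pmul2l (a.+2 * b.+2)) // scaled leq_mul2r.
by apply/orP; right; nia.
Qed.

Theorem claim1 (x y a b : nat) :
  3 <= x -> 3 <= y -> a.*2 <= x -> b.*2 <= y ->
  ~ (x = 4 /\ y = 4 /\ a = 2 /\ b = 2) ->
  'C(x, a) * 'C(y, b) <= 'C(x + y - 1, a + b).
Proof.
move=> le3x le3y le_a_x le_b_y not_exception.
have [-> | a_gt0] := posnP a.
  by rewrite bin0 mul1n add0n leq_bin2l //; lia.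
have [-> | b_gt0] := posnP b.
  by rewrite bin0 muln1 addn0 leq_bin2l //; lia.
have [lt_b_y | ge_b_y] := ltnP b.*2 y; first exact: leq_mul_bin_noncentral.
have [lt_a_x | ge_a_x] := ltnP a.*2 x.
  by rewrite mulnC addnC (addnC a); exact: leq_mul_bin_noncentral.
have -> : x = a.*2 by lia.
have -> : y = b.*2 by lia.
apply: leq_mul_bin_central; lia.
Qed.
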